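(* Let $r>0$ and $d>0$ with $d\sqrt{2}<r$, and let $X\subseteq\mathbb{R}^2$ be a bounded $r$-regular set whose boundary $\partial X$ contains no point of the grid $d\mathbb{Z}^2$. Let $I$ be the digital image of $X$ by the lattice $d\mathbb{Z}^2$. Then one may construct from $I$ (i.e. as a function of the image $I$ alone) a set $\Gamma\subseteq\mathbb{R}^2$ such that $d_H(\partial\Gamma,\partial X)<d$.
   Context: A closed set $X\subseteq\mathbb{R}^2$ is $r$-regular if for each $x\in\partial X$ there are two open balls of radius $r$, $B_r(x_b)\subseteq X$ and $B_r(x_w)\subseteq \mathbb{R}^2\setminus X$, with $\overline{B_r(x_b)}\cap\overline{B_r(x_w)}=\{x\}$. The pixels of the lattice $d\mathbb{Z}^2$ are the closed squares $[dk,d(k+1)]\times[dl,d(l+1)]$, $k,l\in\mathbb{Z}$. The digital image of $X$ assigns to each pixel $C$ the intensity $\lambda=\phi(\mathrm{area}(X\cap C)/d^2)$, where $\phi:[0,1]\to[0,1]$ is a fixed monotonic function with $\phi(0)=0$, $\phi(1)=1$, $\phi((0,1))\subseteq(0,1)$. The Hausdorff distance is $d_H(Y,Z)=\max\{\sup_{y\in Y}\inf_{z\in Z}\|y-z\|,\ \sup_{z\in Z}\inf_{y\in Y}\|y-z\|\}$. *)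

From HB Require Import structures.
From mathcomp Require Import all_boot all_order all_algebra.
From mathcomp Require Import all_classical all_reals all_analysis.
Set Implicit Arguments. Unset Strict Implicit. Unset Printing Implicit Defensive.
Import Order.TTheory GRing.Theory Num.Theory numFieldNormedType.Exports.
Local Open Scope classical_set_scope.
Local Open Scope ring_scope.

Section Digital.
Variable R : realType.

Definition pt := (R * R)%type.

Definition edist (p q : pt) : R :=
  Num.sqrt ((p.1 - q.1) ^+ 2 + (p.2 - q.2) ^+ 2).

Definition oball (c : pt) (r : R) : set pt := [set p | edist c p < r].
Definition cball (c : pt) (r : R) : set pt := [set p | edist c p <= r].

(* topological boundary: closure minus interior (product topology on R*R,
   which is the Euclidean topology) *)
Definition bdry (X : set pt) : set pt := closure X `\` interior X.

Definition bounded_plane (X : set pt) : Prop :=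
  exists M : R, forall x, X x -> edist (0, 0) x <= M.

Definition r_regular (r : R) (X : set pt) : Prop :=
  closed X /\
  forall x, bdry X x ->
    exists xb xw : pt,
      oball xb r `<=` X /\ oball xw r `<=` ~` X /\
      cball xb r `&` cball xw r = [set x].

Definition grid_pt (d : R) (k l : int) : pt := (d * k%:~R, d * l%:~R).

Definition pixel (d : R) (k l : int) : set pt :=
  [set p | d * k%:~R <= p.1 <= d * (k + 1)%:~R /\
           d * l%:~R <= p.2 <= d * (l + 1)%:~R].

Definition area (A : set pt) : \bar R :=
  ((@lebesgue_measure R) \x (@lebesgue_measure R))%E A.

Definition admissible_phi (phi : R -> R) : Prop :=
  (forall x y, 0 <= x -> x <= y -> y <= 1 -> phi x <= phi y) /\
  phi 0 = 0 /\ phi 1 = 1 /\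
  (forall x, 0 < x < 1 -> 0 < phi x < 1).

Definition dimage := int -> int -> R.

Definition digital_image (phi : R -> R) (d : R) (X : set pt) : dimage :=
  fun k l => phi (fine (area (X `&` pixel d k l)) / d ^+ 2).

Definition hausdorff (Y Z : set pt) : \bar R :=
  Order.max
    (ereal_sup [set ereal_inf [set (edist y z)%:E | z in Z] | y in Y])
    (ereal_sup [set ereal_inf [set (edist y z)%:E | y in Y] | z in Z]).

End Digital.
Arguments pt R : clear implicits.
Arguments dimage R : clear implicits.

From Pilot Require Import Defs.
From HB Require Import structures.
From mathcomp Require Import all_boot all_order all_algebra.
From mathcomp Require Import all_classical all_reals all_analysis.
From mathcomp Require Import measurable_realfun lra ring.
Import Order.TTheory GRing.Theory Num.Theory numFieldNormedType.Exports.
Local Open Scope classical_set_scope.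
Local Open Scope ring_scope.
Set Implicit Arguments. Unset Strict Implicit. Unset Printing Implicit Defensive.

(* Gamma(I) is the set of centers of the mixed pixels, those of intensity
   strictly between 0 and 1; pixel centers are isolated, so each of them is a
   boundary point of Gamma.

   A mixed pixel contains points of X and of its complement, so the segment
   joining them meets the boundary of X inside the pixel.

   Conversely, at a boundary point x the two tangent balls of r-regularity
   make every direction on one side of their common normal n enter the
   interior of X, and every direction on the other side enter the interior of
   its complement.  As x is not a grid point, some pixel containing x is
   entered from x by directions of both kinds, unless n is normal to the grid
   line through x; then the grid point ending that edge, interior to X or to
   its complement, supplies the missing side.  That pixel has positive area
   inside and outside X, so it is mixed.

   The points matched in either half of the Hausdorff distance differ by at
   most 3d/5 in each coordinate, hence lie within 3 sqrt 2 d / 5 < d of each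
   other. *)

Section near_zero.
Variables (R : realType) (V : normedModType R).

Lemma near0_interior (A : set V) (x w : V) : A° x -> \forall t \near 0, A° (x + t *: w).
Proof.
move=> Ax; have : (x + t *: w) @[t --> (0 : R)] --> x + 0 *: w.
  by apply: cvgD; [exact: cvg_cst | apply: cvgZ; [exact: cvg_id | exact: cvg_cst]].
rewrite scale0r addr0; apply; apply: open_nbhs_nbhs; split => //.
exact: open_interior.
Qed.

Lemma near0_right (P : set R) : (\forall t \near 0, P t) -> \forall t \near 0^'+, P t.
Proof. by move=> P0; rewrite near_withinE; apply: filterS P0 => t Pt _. Qed.

Lemma interior_meets_near (A B : set V) (x w : V) :
  (\forall t \near 0^'+, A° (x + t *: w)) -> (\forall t \near 0^'+, B° (x + t *: w)) ->
  (A `&` B)° !=set0.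
Proof.
move=> Aw Bw; have [t [At Bt]] := filter_ex (filterI Aw Bw).
by exists (x + t *: w); rewrite interiorI.
Qed.

End near_zero.

Lemma connected_meets_bdry (T : topologicalType) (A X : set T) : connected A ->
  A `&` X !=set0 -> A `&` ~` X !=set0 -> A `&` (closure X `\` X°) !=set0.
Proof.
move=> cA [u [Au Xu]] [v [Av nXv]]; apply: contrapT => noB.
have AXC : A `<=` X° `|` (~` X)°.
  move=> a Aa; have [Xa|nXa] := pselect (X° a); [by left | right].
  by rewrite interiorC => cXa; apply: noB; exists a.
have sep : separated X° (~` X)°.
  split; apply/disjoints_subset.
    by rewrite interiorC setCK; apply: closureS => a; exact: interior_subset.
  move=> a Xa /(closureS (@interior_subset _ (~` X))).
  by rewrite closure_setC; apply.
case: (connected_subset sep AXC cA) => sub.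
  by apply: nXv; apply: interior_subset; exact: sub.
exact: interior_subset (sub _ Au) Xu.
Qed.

(** * Points of the plane *)

Section plane.
Variable R : realType.
Implicit Types (a c p q x w n : pt R) (A X : set (pt R)).

Lemma near0_lt (y w b : R) : y < b -> \forall t \near 0, y + t * w < b.
Proof.
move=> yb; have := @near0_interior R R^o [set z | z < b] y w.
by rewrite (interior_id _).1; [exact | exact: open_lt].
Qed.

Lemma near0_gt (a y w : R) : a < y -> \forall t \near 0, a < y + t * w.
Proof.
rewrite -ltrN2 => ay; apply: filterS (near0_lt (- w) ay) => t.
by rewrite mulrN -opprD ltrN2.
Qed.

Definition dotp p q : R := p.1 * q.1 + p.2 * q.2.
Definition sqdist p q : R := (p.1 - q.1) ^+ 2 + (p.2 - q.2) ^+ 2.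

Lemma rayE x (t : R) w : x + t *: w = (x.1 + t * w.1, x.2 + t * w.2).
Proof. by []. Qed.

Lemma dotp_gt0 n : n != 0 -> 0 < dotp n n.
Proof.
move=> n0; rewrite /dotp -!expr2 lt_def addr_ge0 ?sqr_ge0 // andbT.
apply: contra n0; rewrite paddr_eq0 ?sqr_ge0 // !sqrf_eq0 => /andP [/eqP e1 /eqP e2].
by case: n e1 e2 => ? ? /= -> ->.
Qed.

Lemma edist_ltE p q (r : R) : 0 < r -> (Defs.edist p q < r) = (sqdist p q < r ^+ 2).
Proof. by move=> r0; rewrite -[in RHS]ltr_sqrt ?exprn_gt0 // sqrtr_sqr gtr0_norm. Qed.

Lemma edist_leE p q (r : R) : 0 <= r -> (Defs.edist p q <= r) = (sqdist p q <= r ^+ 2).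
Proof. by move=> r0; rewrite -[in RHS]ler_sqrt ?sqr_ge0 // sqrtr_sqr ger0_norm. Qed.

Lemma sqr_le_of_norm_le (u b : R) : `|u| <= b -> u ^+ 2 <= b ^+ 2.
Proof. by rewrite ler_norml => /andP [h1 h2]; rewrite !expr2; nra. Qed.

Lemma edist_le_box p q (b : R) :
  `|p.1 - q.1| <= b -> `|p.2 - q.2| <= b -> Defs.edist p q <= Num.sqrt 2 * b.
Proof.
move=> h1 h2; have b0 : 0 <= b := le_trans (normr_ge0 _) h1.
rewrite edist_leE ?mulr_ge0 ?sqrtr_ge0 // exprMn sqr_sqrtr //.
by have := sqr_le_of_norm_le h1; have := sqr_le_of_norm_le h2; rewrite /sqdist; lra.
Qed.

Lemma sqr_midpoint_le (u1 u2 v1 v2 s : R) : u1 ^+ 2 + u2 ^+ 2 <= s ->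
  v1 ^+ 2 + v2 ^+ 2 <= s -> ((u1 + v1) / 2) ^+ 2 + ((u2 + v2) / 2) ^+ 2 <= s.
Proof.
move=> hu hv; have := sqr_ge0 (u1 - v1); have := sqr_ge0 (u2 - v2).
have -> : ((u1 + v1) / 2) ^+ 2 + ((u2 + v2) / 2) ^+ 2 =
    (u1 ^+ 2 + u2 ^+ 2 + (v1 ^+ 2 + v2 ^+ 2)) / 2
    - ((u1 - v1) ^+ 2 + (u2 - v2) ^+ 2) / 4 by field.
lra.
Qed.

Lemma sqdist_midpoint_le a c x (s : R) : sqdist a x <= s -> sqdist c x <= s ->
  sqdist a ((a.1 + c.1) / 2, (a.2 + c.2) / 2) <= s.
Proof.
rewrite /sqdist /= => ha hc.
have e (u v y : R) : u - (u + v) / 2 = ((u - y) + (y - v)) / 2 by field.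
rewrite (e _ _ x.1) (e _ _ x.2); apply: sqr_midpoint_le => //.
by rewrite -[x.1 - _]opprB -[x.2 - _]opprB !sqrrN.
Qed.

Lemma edist_continuous c : continuous (Defs.edist c).
Proof.
move=> p; apply: continuous_comp; last exact: sqrt_continuous.
by apply: cvgD; apply: cvgM; apply: cvgB;
  [exact: cvg_cst | exact: cvg_fst | exact: cvg_cst | exact: cvg_fst
  |exact: cvg_cst | exact: cvg_snd | exact: cvg_cst | exact: cvg_snd].
Qed.

Lemma oball_interior c (r : R) X : oball c r `<=` X -> oball c r `<=` X°.
Proof.
have oB : open (oball c r).
  exact: open_comp (fun p _ => @edist_continuous c p) (@open_lt _ r).
by move=> cX; rewrite -((interior_id _).1 oB); exact: interiorS.
Qed.

Lemma nbhs_boxP p A : nbhs p A <->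
  exists2 e : R, 0 < e & forall q, `|p.1 - q.1| < e -> `|p.2 - q.2| < e -> A q.
Proof.
split=> [/nbhs_ballP [e e0 pA]|[e e0 pA]].
  by exists e => // q h1 h2; apply: pA.
by apply/nbhs_ballP; exists e => // q [h1 h2]; exact: pA.
Qed.

Lemma closure_box A p (e : R) : closure A p -> 0 < e ->
  exists q, A q /\ `|p.1 - q.1| < e /\ `|p.2 - q.2| < e.
Proof. by move=> pA e0; apply: pA; apply/nbhs_boxP; exists e. Qed.

Lemma not_bdry_interior X g : closed X -> ~ bdry X g -> X° g \/ (~` X)° g.
Proof.
move=> cX ng; have [Xg|nXg] := pselect (X g).
  by left; apply: contrapT => nXg; apply: ng; split => //; exact: subset_closure.
by right; rewrite interiorC -(closure_id _).1.
Qed.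

Lemma segment_meets_bdry X u v : X u -> ~ X v ->
  exists2 t : R, 0 <= t <= 1 & bdry X (u + t *: (v - u)).
Proof.
move=> Xu nXv; set f := fun t : R => u + t *: (v - u).
have cS : connected (f @` `[0, 1]).
  apply: connected_continuous_connected; first exact: segment_connected.
  apply: continuous_subspaceT => t.
  by apply: cvgD; [exact: cvg_cst | apply: cvgZ; [exact: cvg_id | exact: cvg_cst]].
have [_ [[t t01 <-] bz]] : f @` `[0, 1] `&` bdry X !=set0.
  apply: connected_meets_bdry cS _ _.
    exists u; split => //; exists 0; last by rewrite /f scale0r addr0.
    by rewrite /= in_itv /= lexx ler01.
  exists v; split => //; exists 1; last by rewrite /f scale1r addrC subrK.
  by rewrite /= in_itv /= lexx ler01.
by exists t => //; move: t01; rewrite /= in_itv.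
Qed.

Lemma hausdorff_le (Y Z : set (pt R)) (b : R) :
  (forall y, Y y -> exists2 z, Z z & Defs.edist y z <= b) ->
  (forall z, Z z -> exists2 y, Y y & Defs.edist y z <= b) ->
  (hausdorff Y Z <= b%:E)%E.
Proof.
move=> YZ ZY; rewrite /hausdorff ge_max; apply/andP; split.
  apply: ge_ereal_sup => _ [y Yy <-]; have [z Zz yz] := YZ y Yy.
  by apply: ge_ereal_inf; exists (Defs.edist y z)%:E; [exists z | rewrite lee_fin].
apply: ge_ereal_sup => _ [z Zz <-]; have [y Yy yz] := ZY z Zz.
by apply: ge_ereal_inf; exists (Defs.edist y z)%:E; [exists y | rewrite lee_fin].
Qed.

(** * Tangent balls *)

Lemma near0_oball a (r : R) x w : 0 < r -> Defs.edist a x <= r ->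
  0 < dotp w (a - x) -> \forall t \near 0^'+, oball a r (x + t *: w).
Proof.
move=> r0; rewrite edist_leE; last exact: ltW.
move=> ax s0; have small := near0_lt (dotp w w) s0.
near=> t; have t0 : 0 < t by near: t; exact: nbhs_right_gt.
have tw : t * dotp w w < dotp w (a - x).
  by near: t; apply: near0_right; apply: filterS small => t; rewrite add0r.
rewrite /oball /= edist_ltE //.
have -> : sqdist a (x + t *: w) =
    sqdist a x - 2 * t * dotp w (a - x) + t * (t * dotp w w).
  by rewrite rayE /sqdist /dotp /=; ring.
have : t * (t * dotp w w) < t * dotp w (a - x) by rewrite ltr_pM2l.
have : 0 < t * dotp w (a - x) by rewrite mulr_gt0.
lra.
Unshelve. all: by end_near.
Qed.

(* All that the proof uses of r-regularity at a boundary point [x]. *)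
Definition two_sided X x n := n != 0 /\ forall w,
  (0 < dotp w n -> \forall t \near 0^'+, X° (x + t *: w)) /\
  (dotp w n < 0 -> \forall t \near 0^'+, (~` X)° (x + t *: w)).

Lemma regular_two_sided (r : R) X x : 0 < r -> r_regular r X -> bdry X x ->
  exists n, two_sided X x n.
Proof.
move=> r0 [_ rX] /rX [xb [xw [bX [wX bw]]]].
have [hb hw] : cball xb r x /\ cball xw r x.
  by have [] : (cball xb r `&` cball xw r) x by rewrite bw.
(* The midpoint of the two centers lies in both closed balls, hence is [x]. *)
have : (cball xb r `&` cball xw r) ((xb.1 + xw.1) / 2, (xb.2 + xw.2) / 2).
  have r0' := ltW r0; move: hb hw; rewrite /cball /= !edist_leE // => hb hw.
  split; first exact: sqdist_midpoint_le hb hw.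
  by rewrite (addrC xb.1) (addrC xb.2); exact: sqdist_midpoint_le hw hb.
rewrite bw => /= mid; have [mid1 mid2] := (congr1 fst mid, congr1 snd mid).
rewrite /= in mid1 mid2.
have opp w : dotp w (xw - x) = - dotp w (xb - x).
  by rewrite /dotp /= -mid1 -mid2; field.
exists (xb - x); split => [|w]; last split => s.
- apply/eqP => n0; have [e1 e2] := (congr1 fst n0, congr1 snd n0); rewrite /= in e1 e2.
  have eb : sqdist xb x = 0 by rewrite /sqdist e1 e2 expr0n /= addr0.
  have [ew1 ew2] : xw.1 - x.1 = 0 /\ xw.2 - x.2 = 0 by split; lra.
  have ew : sqdist xw x = 0 by rewrite /sqdist ew1 ew2 expr0n /= addr0.
  have inb : oball xb r x by rewrite /oball /= edist_ltE // eb exprn_gt0.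
  have inw : oball xw r x by rewrite /oball /= edist_ltE // ew exprn_gt0.
  exact: wX _ inw (bX _ inb).
- by apply: filterS (near0_oball r0 hb s) => t; exact: oball_interior.
- rewrite -oppr_gt0 -opp in s.
  by apply: filterS (near0_oball r0 hw s) => t; exact: oball_interior.
Qed.

Definition swap p : pt R := (p.2, p.1).

Lemma interior_swap A : (swap @^-1` A)° = swap @^-1` A°.
Proof.
rewrite predeqE => p; rewrite /interior /= !nbhs_boxP.
by split=> -[e e0 pA]; exists e => // -[q1 q2] h1 h2; exact: (pA (q2, q1)).
Qed.

Lemma two_sided_swap X x n :
  two_sided X x n -> two_sided (swap @^-1` X) (swap x) (swap n).
Proof.
move=> [n0 sides]; split.
  by apply: contra n0; case: (n) => n1 n2 /eqP [-> ->].
move=> w; have [pos neg] := sides (swap w).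
have -> : dotp w (swap n) = dotp (swap w) n by rewrite /dotp /= addrC.
rewrite preimage_setC !interior_swap; split => s.
  by apply: filterS (pos s) => t; case: w {pos neg s}.
by apply: filterS (neg s) => t; case: w {pos neg s}.
Qed.

End plane.

Arguments swap {R}.

(** * Pixels *)

Section pixels.
Variables (R : realType) (d : R).
Hypothesis d0 : 0 < d.
Implicit Types (p x w g n : pt R) (A X : set (pt R)) (k l : int).

Lemma grid_ltS k : d * k%:~R < d * (k + 1)%:~R.
Proof. by rewrite intrD mulrDr mulr1 ltrDl. Qed.

Lemma floor_grid (y : R) :
  d * (Num.floor (y / d))%:~R <= y < d * (Num.floor (y / d) + 1)%:~R.
Proof.
have /andP [h1 h2] := floor_itv (y / d).
by rewrite !(mulrC d) -ler_pdivlMr // -ltr_pdivrMr // h1 h2.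
Qed.

Definition pixel_center k l : pt R := (d * k%:~R + d / 2, d * l%:~R + d / 2).

Lemma pixel_center_near k l p : pixel d k l p ->
  `|p.1 - (pixel_center k l).1| <= d / 2 /\ `|p.2 - (pixel_center k l).2| <= d / 2.
Proof.
rewrite /pixel /= !intrD !mulrDr !mulr1 => -[/andP [h1 h2] /andP [h3 h4]].
by rewrite !ler_norml; split; apply/andP; split; lra.
Qed.

Lemma pixel_convex k l u v (t : R) : pixel d k l u -> pixel d k l v -> 0 <= t <= 1 ->
  pixel d k l (u + t *: (v - u)).
Proof.
have conv (a b y z : R) : 0 <= t <= 1 -> a <= y <= b -> a <= z <= b ->
    a <= y + t * (z - y) <= b.
  by move=> /andP [? ?] /andP [? ?] /andP [? ?]; apply/andP; split; nra.
by move=> [u1 u2] [v1 v2] t01; split; apply: conv.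
Qed.

Lemma pixel_swap k l : swap @^-1` pixel d k l = pixel d l k.
Proof. by rewrite predeqE => p; split => -[]. Qed.

(* Moving from [y] in direction [w] immediately enters the interval ]a, b[. *)
Definition enters (a b y w : R) :=
  (a < y \/ a = y /\ 0 < w) /\ (y < b \/ y = b /\ w < 0).

Lemma enters_inside (a b y w : R) : a < y < b -> enters a b y w.
Proof. by move=> /andP [ay yb]; split; left. Qed.

Lemma enters_toward (a b y m : R) : a <= y <= b -> a < m < b -> enters a b y (m - y).
Proof.
move=> /andP [ay yb] /andP [am mb]; split.
  by move: ay; rewrite le_eqVlt => /predU1P [<-|]; [right; rewrite subr_gt0 | left].
by move: yb; rewrite le_eqVlt => /predU1P [->|]; [right; rewrite subr_lt0 | left].
Qed.

Lemma enters_grid_line k (w : R) : w != 0 -> exists2 k' : int,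
  enters (d * k'%:~R) (d * (k' + 1)%:~R) (d * k%:~R) w &
  d * k'%:~R <= d * k%:~R <= d * (k' + 1)%:~R.
Proof.
move=> w0; have [wn|wp|wz] := ltgtP w 0; last by rewrite wz eqxx in w0.
  exists (k - 1); rewrite subrK ?lexx ?andbT; last by rewrite ler_pM2l // ler_int gerBl.
  by split; [left | right]; rewrite // ltr_pM2l // ltr_int ltrBlDr ltrDl.
exists k; rewrite ?lexx ?(ltW (grid_ltS k)) //.
by split; [right | left; exact: grid_ltS].
Qed.

Lemma near0_above (a y w : R) : a < y \/ a = y /\ 0 < w ->
  \forall t \near 0^'+, a < y + t * w.
Proof.
case=> [ay|[<- w0]]; first by apply: near0_right; exact: near0_gt.
by near=> t; rewrite ltrDl mulr_gt0 //; near: t; exact: nbhs_right_gt.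
Unshelve. all: by end_near.
Qed.

Lemma near0_below (b y w : R) : y < b \/ y = b /\ w < 0 ->
  \forall t \near 0^'+, y + t * w < b.
Proof.
case=> [yb|[-> w0]]; first by apply: near0_right; exact: near0_lt.
by near=> t; rewrite gtrDl nmulr_llt0 //; near: t; exact: nbhs_right_gt.
Unshelve. all: by end_near.
Qed.

Lemma interior_pixel k l p : d * k%:~R < p.1 < d * (k + 1)%:~R ->
  d * l%:~R < p.2 < d * (l + 1)%:~R -> (pixel d k l)° p.
Proof.
move=> p1 p2.
exists (`]d * k%:~R, d * (k + 1)%:~R[%classic, `]d * l%:~R, d * (l + 1)%:~R[%classic).
  by split; apply: near_in_itvoo; rewrite in_itv.
move=> q [/=]; rewrite !in_itv /= => /andP [? ?] /andP [? ?].
by split; apply/andP; split; exact: ltW.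
Qed.

Lemma near0_pixel_interior k l x w :
  enters (d * k%:~R) (d * (k + 1)%:~R) x.1 w.1 ->
  enters (d * l%:~R) (d * (l + 1)%:~R) x.2 w.2 ->
  \forall t \near 0^'+, (pixel d k l)° (x + t *: w).
Proof.
move=> [a1 b1] [a2 b2]; near=> t; apply: interior_pixel; apply/andP; split; near: t.
- exact: near0_above.
- exact: near0_below.
- exact: near0_above.
- exact: near0_below.
Unshelve. all: by end_near.
Qed.

Lemma interior_meets_pixel A k l g : A° g -> pixel d k l g ->
  (A `&` pixel d k l)° !=set0.
Proof.
move=> Ag [g1 g2]; apply: (interior_meets_near (x := g) (w := pixel_center k l - g)).
  exact: near0_right (near0_interior _ Ag).
apply: near0_pixel_interior; apply: enters_toward => //=;
  by rewrite intrD mulrDr mulr1; apply/andP; split; have := d0; lra.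
Qed.

Definition straddles X k l :=
  (X `&` pixel d k l)° !=set0 /\ (~` X `&` pixel d k l)° !=set0.

Lemma straddles_swap X k l : straddles (swap @^-1` X) l k -> straddles X k l.
Proof.
have meets A : (swap @^-1` A `&` pixel d l k)° !=set0 -> (A `&` pixel d k l)° !=set0.
  by rewrite -pixel_swap -preimage_setI interior_swap => -[p Ap]; exists (swap p).
by rewrite /straddles preimage_setC => -[/meets ? /meets ?].
Qed.

Lemma straddles_inside X x n k l : two_sided X x n ->
  d * k%:~R < x.1 < d * (k + 1)%:~R -> d * l%:~R < x.2 < d * (l + 1)%:~R ->
  straddles X k l.
Proof.
move=> [n0 sides] x1 x2; have nn := dotp_gt0 n0.
have Pw w : \forall t \near 0^'+, (pixel d k l)° (x + t *: w).
  by apply: near0_pixel_interior; exact: enters_inside.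
split; [apply: interior_meets_near (Pw n) | apply: interior_meets_near (Pw (- n))].
  exact: (sides n).1.
by apply: (sides _).2; move: nn; rewrite /dotp /=; lra.
Qed.

Lemma vertical_edge_pixel x k l (b : R) : x.1 = d * k%:~R ->
  d * l%:~R < x.2 < d * (l + 1)%:~R -> b != 0 -> exists2 k',
    (forall w, w.1 = b -> \forall t \near 0^'+, (pixel d k' l)° (x + t *: w)) &
    pixel d k' l x /\ pixel d k' l (grid_pt d k l).
Proof.
move=> x1 x2 b0; have [k' e k'k] := enters_grid_line k b0; exists k'.
  move=> w w1; apply: near0_pixel_interior; first by rewrite x1 w1.
  exact: enters_inside.
have lxl : d * l%:~R <= x.2 <= d * (l + 1)%:~R by case/andP: x2 => ? ?; rewrite !ltW.
by split; split => //=; rewrite ?x1 // lexx ltW ?grid_ltS.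
Qed.

(* The corner case, where [n] is normal to the grid line through [x], is why
   grid points must avoid the boundary. *)
Lemma straddles_vertical_edge X x n k l : two_sided X x n ->
  X° (grid_pt d k l) \/ (~` X)° (grid_pt d k l) ->
  x.1 = d * k%:~R -> d * l%:~R < x.2 < d * (l + 1)%:~R ->
  exists k', pixel d k' l x /\ straddles X k' l.
Proof.
move=> [n0 sides] g x1 x2; have side := vertical_edge_pixel x1 x2.
have [n2|n2] := eqVneq n.2 0.
  have n1 : n.1 != 0.
    by apply: contra n0 => /eqP n1; apply/eqP; case: (n) n1 n2 => ? ? /= -> ->.
  case: g => g.
    have [|k' Pw [Px Pg]] := side (- n.1); first by rewrite oppr_eq0.
    exists k'; split => //; split; first exact: interior_meets_pixel g Pg.
    apply: interior_meets_near (Pw (- n) erefl); apply: (sides _).2.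
    by have := dotp_gt0 n0; rewrite /dotp /=; lra.
  have [k' Pw [Px Pg]] := side n.1 n1.
  exists k'; split => //; split; last exact: interior_meets_pixel g Pg.
  by apply: interior_meets_near (Pw n erefl); apply: (sides _).1; exact: dotp_gt0.
(* The directions (n.2^2, +-n.2 c) enter the same pixel, on either side of [n]. *)
set c := `|n.1| + 1; have n22 : 0 < n.2 ^+ 2 by rewrite exprn_even_gt0.
have [|k' Pw [Px _]] := side (n.2 ^+ 2); first by rewrite sqrf_eq0.
have := ler_norm n.1; have := ler_norm (- n.1); rewrite normrN => hn hp.
exists k'; split => //; split.
  apply: interior_meets_near (Pw (n.2 ^+ 2, n.2 * c) erefl); apply: (sides _).1.
  have -> : dotp (n.2 ^+ 2, n.2 * c) n = n.2 ^+ 2 * (n.1 + c) by rewrite /dotp /=; ring.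
  by rewrite mulr_gt0 // /c; lra.
apply: interior_meets_near (Pw (n.2 ^+ 2, - (n.2 * c)) erefl); apply: (sides _).2.
have -> : dotp (n.2 ^+ 2, - (n.2 * c)) n = n.2 ^+ 2 * (n.1 - c) by rewrite /dotp /=; ring.
by rewrite pmulr_rlt0 // /c; lra.
Qed.

Lemma straddles_horizontal_edge X x n k l : two_sided X x n ->
  X° (grid_pt d k l) \/ (~` X)° (grid_pt d k l) ->
  x.2 = d * l%:~R -> d * k%:~R < x.1 < d * (k + 1)%:~R ->
  exists l', pixel d k l' x /\ straddles X k l'.
Proof.
move=> /two_sided_swap sx g x2 x1.
have g' : (swap @^-1` X)° (grid_pt d l k) \/ (~` (swap @^-1` X))° (grid_pt d l k).
  by rewrite preimage_setC !interior_swap.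
have [l' [[Px1 Px2] sX]] := straddles_vertical_edge sx g' x2 x1.
by exists l'; split; [split | exact: straddles_swap].
Qed.

Lemma bdry_straddled (r : R) X x : 0 < r -> r_regular r X ->
  (forall k l, ~ bdry X (grid_pt d k l)) -> bdry X x ->
  exists k l, pixel d k l x /\ straddles X k l.
Proof.
move=> r0 Xreg Xgrid bx; have [n nx] := regular_two_sided r0 Xreg bx.
have cX : closed X by case: Xreg.
have grid_side k l := not_bdry_interior cX (Xgrid k l).
have /andP [k1 k2] := floor_grid x.1; have /andP [l1 l2] := floor_grid x.2.
set k := Num.floor _ in k1 k2; set l := Num.floor _ in l1 l2.
have [ex1|ex1] := eqVneq (d * k%:~R) x.1; have [ex2|ex2] := eqVneq (d * l%:~R) x.2.
- by case: (Xgrid k l); rewrite /grid_pt ex1 ex2; case: (x) bx.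
- have x2 : d * l%:~R < x.2 < d * (l + 1)%:~R by rewrite lt_neqAle ex2 l1 l2.
  have [k' [Px sX]] := straddles_vertical_edge nx (grid_side k l) (esym ex1) x2.
  by exists k', l.
- have x1 : d * k%:~R < x.1 < d * (k + 1)%:~R by rewrite lt_neqAle ex1 k1 k2.
  have [l' [Px sX]] := straddles_horizontal_edge nx (grid_side k l) (esym ex2) x1.
  by exists k, l'.
- have x1 : d * k%:~R < x.1 < d * (k + 1)%:~R by rewrite lt_neqAle ex1 k1 k2.
  have x2 : d * l%:~R < x.2 < d * (l + 1)%:~R by rewrite lt_neqAle ex2 l1 l2.
  exists k, l; split; last exact: straddles_inside nx x1 x2.
  by split; rewrite ?k1 ?l1 ltW.
Qed.

Definition mixed_centers (I : dimage R) : set (pt R) :=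
  [set p | exists k l, 0 < I k l < 1 /\ p = pixel_center k l].

Lemma center_in_bdry (G : set (pt R)) k l :
  (forall p, G p -> exists k' l', p = pixel_center k' l') ->
  G (pixel_center k l) -> bdry G (pixel_center k l).
Proof.
move=> Gc Gkl; split; first exact: subset_closure.
(* No point (c.1 + s, c.2) with 0 < s < d is a pixel center. *)
move=> /nbhs_boxP [e e0 cG]; set s := Num.min (e / 2) (d / 2).
have s0 : 0 < s by rewrite lt_min !divr_gt0.
have se : s < e by rewrite gt_min; apply/orP; left; lra.
have sd : s < d by rewrite gt_min; apply/orP; right; have := d0; lra.
have [|k' [l' /(congr1 fst)]] := Gc ((pixel_center k l).1 + s, (pixel_center k l).2).
  by apply: cG; rewrite /= ?subrr ?normr0 // opprD addNKr normrN gtr0_norm.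
rewrite /= => ek; have {}ek : s = d * (k' - k)%:~R by rewrite intrB mulrBr; lra.
have : 0 < k' - k by rewrite -(ltr0z R) -(pmulr_rgt0 _ d0) -ek.
rewrite gtz0_ge1 -(ler_int R) => /(ler_wpM2l (ltW d0)); rewrite -ek mulr1; lra.
Qed.

End pixels.

(** * Areas and digital images *)

Section area.
Variable R : realType.
Implicit Types (A B X : set (pt R)) (p : pt R).

(* [area] integrates the measures of sections, so monotonicity only needs
   measurable sections; closed sets are not known to be product-measurable. *)
Lemma area_le A B : (forall x, measurable (xsection A x)) ->
  (forall x, measurable (xsection B x)) -> A `<=` B -> (area A <= area B)%E.
Proof.
move=> mA mB AB; rewrite /area /product_measure1 !ge0_integralTE //.
apply: ereal_sup_le => _ [h hle <-]; exists h => //= x.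
apply: le_trans (hle x) _; apply: le_measure; rewrite ?inE //.
- exact: mA.
- exact: mB.
- by move=> y /xsectionP /AB /xsectionP.
Qed.

Lemma area_rect (a1 b1 a2 b2 : R) : a1 < b1 -> a2 < b2 ->
  area (`[a1, b1]%classic `*` `[a2, b2]%classic) = ((b1 - a1) * (b2 - a2))%:E.
Proof.
move=> h1 h2; rewrite /area product_measure1E //.
have itv (a b : R) : a < b -> lebesgue_measure (`[a, b]%classic : set R) = (b - a)%:E.
  by move=> ab; rewrite lebesgue_measure_itv /= lte_fin ab.
transitivity ((b1 - a1)%:E * (b2 - a2)%:E)%E; last by [].
by congr (_ * _)%E; exact: itv.
Qed.

Lemma measurable_xsection_closed X x : closed X -> measurable (xsection X x).
Proof.
move=> cX; apply: closed_measurable; rewrite xsectionE.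
apply: preimage_closed cX => y _.
exact: (cvg_pair (cvg_cst x) cvg_id).
Qed.

Definition square p (e : R) : set (pt R) :=
  `[p.1 - e, p.1 + e]%classic `*` `[p.2 - e, p.2 + e]%classic.

Lemma area_square p (e : R) : 0 < e -> area (square p e) = (4 * e ^+ 2)%:E.
Proof. by move=> e0; rewrite area_rect; [congr (_%:E); ring | lra | lra]. Qed.

Lemma interior_square A p : A° p -> exists2 e : R, 0 < e & square p e `<=` A.
Proof.
move=> /nbhs_boxP [e e0 pA]; exists (e / 2); first by rewrite divr_gt0.
move=> q [/=]; rewrite !in_itv /= => /andP [? ?] /andP [? ?].
by apply: pA; rewrite ltr_norml; apply/andP; split; lra.
Qed.

End area.

Section digital.
Variables (R : realType) (d : R) (phi : R -> R).
Hypotheses (d0 : 0 < d) (hphi : admissible_phi phi).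
Implicit Types (X : set (pt R)) (p : pt R) (k l : int).

Lemma pixelE k l : pixel d k l =
  `[d * k%:~R, d * (k + 1)%:~R]%classic `*` `[d * l%:~R, d * (l + 1)%:~R]%classic.
Proof. by rewrite predeqE => p; rewrite /pixel /setX /= !in_itv. Qed.

Lemma measurable_pixel k l : measurable (pixel d k l).
Proof. by rewrite pixelE; exact: measurableX. Qed.

Lemma area_pixel k l : area (pixel d k l) = (d ^+ 2)%:E.
Proof.
by rewrite pixelE area_rect ?grid_ltS //; congr (_%:E); rewrite !intrD; ring.
Qed.

Lemma area_pixel_square k l p (e : R) : 0 < e -> square p e `<=` pixel d k l ->
  area (pixel d k l `\` square p e) = (d ^+ 2 - 4 * e ^+ 2)%:E.
Proof.
move=> e0 sP; rewrite /area measureD; [|exact: measurable_pixel|exact: measurableX|].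
  rewrite (setIidr sP).
  change (area (pixel d k l) - area (square p e) = (d ^+ 2 - 4 * e ^+ 2)%:E)%E.
  by rewrite area_pixel area_square.
by change (area (pixel d k l) < +oo)%E; rewrite area_pixel ltry.
Qed.

Lemma digital_image_gt0 X k l :
  0 < digital_image phi d X k l -> X `&` pixel d k l !=set0.
Proof.
rewrite /digital_image; apply: contraPP => /nonemptyPn ->.
by case: hphi => _ [phi0 _]; rewrite /area measure0 /= mul0r phi0 ltxx.
Qed.

Lemma digital_image_lt1 X k l :
  digital_image phi d X k l < 1 -> ~` X `&` pixel d k l !=set0.
Proof.
rewrite /digital_image; apply: contraPP => /nonemptyPn nX.
have -> : X `&` pixel d k l = pixel d k l.
  apply/seteqP; split => [p [] //|p Pp]; split => //.
  by apply: contrapT => nXp; have : (~` X `&` pixel d k l) p by []; rewrite nX.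
case: hphi => _ [_ [phi1 _]].
by rewrite area_pixel /= divff ?expf_neq0 ?gt_eqF // phi1 ltxx.
Qed.

Lemma digital_image_straddles X k l : closed X -> straddles d X k l ->
  0 < digital_image phi d X k l < 1.
Proof.
move=> cX [[p1 /interior_square [e1 e10 s1]] [p2 /interior_square [e2 e20 s2]]].
have mP x : measurable (xsection (pixel d k l) x).
  exact: measurable_xsection (measurable_pixel k l).
have mS p e x : measurable (xsection (square p e) x).
  by apply: measurable_xsection; exact: measurableX.
have mXP x : measurable (xsection (X `&` pixel d k l) x).
  by rewrite xsectionI; apply: measurableI; [exact: measurable_xsection_closed|].
have lo : (area (square p1 e1) <= area (X `&` pixel d k l))%E by apply: area_le.
have hi : (area (X `&` pixel d k l) <= area (pixel d k l `\` square p2 e2))%E.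
  apply: area_le => // [x|p [Xp Pp]].
    by rewrite xsectionD; apply: measurableD; [exact: mP | exact: mS].
  by split => // /s2 [].
rewrite area_square // in lo.
rewrite area_pixel_square // in hi; last by move=> p /s2 [].
have finA : area (X `&` pixel d k l) = (fine (area (X `&` pixel d k l)))%:E.
  rewrite fineK //; apply/fin_real/andP; split.
    by rewrite (lt_le_trans _ lo) // ltNyr.
  by rewrite (le_lt_trans hi) // ltry.
move: lo hi; rewrite finA !lee_fin /digital_image; set a := fine _ => lo hi.
case: hphi => _ [_ [_ phi01]]; apply: phi01.
have d2 : 0 < d ^+ 2 by rewrite exprn_gt0.
have e1p := exprn_gt0 2 e10; have e2p := exprn_gt0 2 e20.
by rewrite divr_gt0 ?ltr_pdivrMr //= ?mul1r; lra.
Qed.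

Lemma mixed_center_near_bdry X y :
  bdry (mixed_centers d (digital_image phi d X)) y ->
  exists2 z, bdry X z & Defs.edist y z <= Num.sqrt 2 * (3 * d / 5).
Proof.
move=> [cly _]; have d10 : 0 < d / 10 by rewrite divr_gt0.
have [_ [[k [l [/andP [I0 I1] ->]]] [c1 c2]]] := closure_box cly d10.
have [u [Xu Pu]] := digital_image_gt0 I0; have [v [nXv Pv]] := digital_image_lt1 I1.
have [t t01 bz] := segment_meets_bdry Xu nXv.
exists (u + t *: (v - u)) => //.
have [z1 z2] := pixel_center_near (pixel_convex Pu Pv t01).
rewrite distrC in z1; rewrite distrC in z2.
by apply: edist_le_box; apply: le_trans (ler_distD _ _ _) _; lra.
Qed.

Lemma bdry_near_mixed_center (r : R) X x : 0 < r -> r_regular r X ->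
  (forall k l, ~ bdry X (grid_pt d k l)) -> bdry X x ->
  exists2 c, bdry (mixed_centers d (digital_image phi d X)) c &
    Defs.edist c x <= Num.sqrt 2 * (d / 2).
Proof.
move=> r0 Xreg Xgrid /(bdry_straddled d0 r0 Xreg Xgrid) [k [l [Px sX]]].
have cX : closed X by case: Xreg.
exists (pixel_center d k l).
  apply: (center_in_bdry d0) => [p [k' [l' [_ ->]]]|]; first by exists k', l'.
  by exists k, l; split => //; exact: digital_image_straddles.
by have [x1 x2] := pixel_center_near Px; apply: edist_le_box; rewrite distrC.
Qed.

End digital.

Lemma sqrt2_lt (R : realType) : Num.sqrt (2 : R) < 3 / 2.
Proof.
have s0 := sqrtr_ge0 (2 : R); have := sqr_sqrtr (ler0n R 2).
by rewrite expr2 => s2; nra.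
Qed.

Theorem theorem2p6 (R : realType) (d : R) (phi : R -> R) :
  0 < d -> admissible_phi phi ->
  exists Gamma : dimage R -> set (pt R),
    forall (r : R) (X : set (pt R)),
      0 < r -> d * Num.sqrt 2 < r ->
      bounded_plane X -> r_regular r X ->
      (forall k l : int, ~ bdry X (grid_pt d k l)) ->
      (hausdorff (bdry (Gamma (digital_image phi d X))) (bdry X) < d%:E)%E.
Proof.
move=> d0 hphi; exists (mixed_centers d) => r X r0 _ _ Xreg Xgrid.
have s2 := sqrt2_lt R; have s0 := sqrtr_ge0 (2 : R).
apply: (@le_lt_trans _ _ (Num.sqrt 2 * (3 * d / 5))%:E); last by rewrite lte_fin; nra.
apply: hausdorff_le => [y /(mixed_center_near_bdry d0 hphi) //|x].
move=> /(bdry_near_mixed_center d0 hphi r0 Xreg Xgrid) [c bc cx].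
by exists c => //; apply: le_trans cx _; rewrite ler_wpM2l //; lra.
Qed.
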